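(* The class $\mathrm{Age}(C_3[I_\omega]^* )$ has the expansion property relative to $\mathrm{Age}(C_3[I_\omega])$, where $C_3[I_\omega]$ is the reduct of $C_3[I_\omega]^*$ to $\{E\}$.
   Context: Expansion property: let $L\subseteq L^*$ be relational languages, $\mathcal K$ a class of finite $L$-structures and $\mathcal K^*$ a class of finite $L^*$-structures whose $L$-reducts lie in $\mathcal K$. $\mathcal K^*$ has the expansion property relative to $\mathcal K$ if for every $\mathbf A\in\mathcal K$ there is $\mathbf B\in\mathcal K$ such that for all $\mathbf A^*,\mathbf B^*\in\mathcal K^*$ whose $L$-reducts are $\mathbf A$ and $\mathbf B$ respectively, $\mathbf A^*$ embeds into $\mathbf B^*$. The age of a structure is the class of finite structures embeddable in it. $C_3$ is the directed 3-cycle on $[3]=\{0,1,2\}$ with edges $(0,1),(1,2),(2,0)$. Fix a linear order $\prec$ on $\mathbb N$ with $(\mathbb N,\prec)\cong(\mathbb Q,<)$. $C_3[I_\omega]^*$ is the structure with universe $[3]\times\mathbb N$ in the language $\{E,P_0,P_1,P_2,<\}$ where $E((i,a),(j,b))$ iff $(i,j)$ is an edge of $C_3$; $P_i=\{i\}\times\mathbb N$; and $(i,a)<(j,b)$ iff $i<j$, or $i=j$ and $a\prec b$. *)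

From HB Require Import structures.
From mathcomp Require Import all_boot all_order all_algebra.
Set Implicit Arguments. Unset Strict Implicit. Unset Printing Implicit Defensive.
Import Order.TTheory GRing.Theory Num.Theory.

Record Lstr : Type := { Lcar : finType; LE : rel Lcar }.

Definition L_emb (A B : Type) (EA : rel A) (EB : rel B) (f : A -> B) : Prop :=
  injective f /\ forall x y, EB (f x) (f y) = EA x y.

Definition S_emb (A B : Type) (EA : rel A) (PA : 'I_3 -> pred A) (ltA : rel A)
  (EB : rel B) (PB : 'I_3 -> pred B) (ltB : rel B) (f : A -> B) : Prop :=
  [/\ injective f,
      forall x y, EB (f x) (f y) = EA x y,
      forall i x, PB i (f x) = PA i x
    & forall x y, ltB (f x) (f y) = ltA x y].

Definition C3E : rel ('I_3 * nat) :=
  fun x y => (nat_of_ord y.1 == (nat_of_ord x.1).+1 %% 3)%N.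
Definition C3P : 'I_3 -> pred ('I_3 * nat) := fun i x => x.1 == i.
Definition C3lt (prec : rel nat) : rel ('I_3 * nat) :=
  fun x y => ((nat_of_ord x.1 < nat_of_ord y.1)%N ||
              ((x.1 == y.1) && prec x.2 y.2)).

Definition iso_to_Q (prec : rel nat) : Prop :=
  exists f : nat -> rat, bijective f /\ forall a b, prec a b = (f a < f b)%R.

Definition in_AgeL (A : Lstr) : Prop :=
  exists f : Lcar A -> 'I_3 * nat, L_emb (@LE A) C3E f.

Definition in_AgeS (prec : rel nat) (A : Lstr) (P : 'I_3 -> pred (Lcar A))
  (ltr : rel (Lcar A)) : Prop :=
  exists f : Lcar A -> 'I_3 * nat, S_emb (@LE A) P ltr C3E C3P (C3lt prec) f.

(* An L^*-structure whose L-reduct is A is given as A together with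
   interpretations of P_0,P_1,P_2 and < on the universe of A. *)
Definition expansion_property (prec : rel nat) : Prop :=
  forall A : Lstr, in_AgeL A ->
  exists2 B : Lstr, in_AgeL B &
  forall (PA : 'I_3 -> pred (Lcar A)) (ltA : rel (Lcar A))
         (PB : 'I_3 -> pred (Lcar B)) (ltB : rel (Lcar B)),
    in_AgeS prec PA ltA -> in_AgeS prec PB ltB ->
    exists g : Lcar A -> Lcar B, S_emb (@LE A) PA ltA (@LE B) PB ltB g.

From HB Require Import structures.
From mathcomp Require Import all_boot all_order all_algebra.
Set Implicit Arguments. Unset Strict Implicit. Unset Printing Implicit Defensive.
Import Order.TTheory GRing.Theory.

(* A member of Age(C_3[I_omega]^* ) is a finite structure whose points carry a
   colour in [3] (the part P_i they lie in) and, inside each colour class, a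
   linear order inherited from (N, prec) ~ (Q, <); edges and the order across
   colours are determined by the colours alone.  Given A in the age of the
   reduct, take B = C_3[I_n] with n = |A| + 1, i.e. three columns of n points
   with all edges from column k to column k+1.
   - Any {E}-embedding of B into C_3[I_omega] maps column k into part k + c for
     a fixed c (the colouring is a rotation), so in every expansion of B each
     colour class has n > |A| points.
   - Finite chains embed order-preservingly into any chain of at least the same
     size (sort both and match ranks); doing this colour by colour gives a map
     A -> B preserving colours and the order inside colours.
   - Such a map is automatically an embedding of the expanded structures. *)

Section KeyedChains.
Variables (disp : Order.disp_t) (D : orderType disp).

Definition key_sort (T : finType) (P : pred T) (k : T -> D) : seq T :=
  sort (relpre k <=%O) (enum P).

Lemma key_sort_mem (T : finType) (P : pred T) (k : T -> D) (x : T) :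
  (x \in key_sort P k) = P x.
Proof. by rewrite mem_sort mem_enum. Qed.

Lemma size_key_sort (T : finType) (P : pred T) (k : T -> D) :
  size (key_sort P k) = #|P|.
Proof. by rewrite size_sort cardE. Qed.

Lemma key_sort_nth_lt (T : finType) (P : pred T) (k : T -> D) (x0 : T) :
  {in P &, injective k} ->
  {in [pred i | i < #|P|] &, forall i j,
    (k (nth x0 (key_sort P k) i) < k (nth x0 (key_sort P k) j))%O = (i < j)}.
Proof.
move=> kinj i j hi hj.
have sorted_keys : sorted <%O (map k (key_sort P k)).
  rewrite /key_sort -sort_map sort_lt_sorted map_inj_in_uniq ?enum_uniq //.
  by move=> x y; rewrite !mem_enum; apply: kinj.
have in_range m : m < #|P| -> m < size (key_sort P k) by rewrite size_key_sort.
rewrite -!(nth_map x0 (k x0)) ?in_range //.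
by apply: lt_sorted_ltn_nth; rewrite // inE size_map in_range.
Qed.

(* A finite chain embeds into any chain of at least the same size: send the
   element of rank i to the element of rank i. *)
Lemma keyed_order_embedding (T U : finType) (PT : pred T) (PU : pred U)
    (kT : T -> D) (kU : U -> D) (u0 : U) :
  {in PT &, injective kT} -> {in PU &, injective kU} -> #|PT| <= #|PU| ->
  exists h : T -> U, {in PT, forall x, PU (h x)} /\
    {in PT &, forall x y, (kU (h x) < kU (h y))%O = (kT x < kT y)%O}.
Proof.
move=> kTinj kUinj card_le.
pose sT := key_sort PT kT; pose sU := key_sort PU kU.
have rank_lt x : PT x -> index x sT < #|PU|.
  move=> Px; rewrite (leq_trans _ card_le) //.
  by rewrite -(size_key_sort PT kT) index_mem key_sort_mem.
exists (fun x => nth u0 sU (index x sT)); split.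
  by move=> x Px; rewrite -(key_sort_mem _ kU) mem_nth // size_key_sort rank_lt.
move=> x y Px Py; rewrite key_sort_nth_lt ?inE ?rank_lt //.
rewrite -(key_sort_nth_lt x kTinj) ?inE -?(size_key_sort PT kT) //;
  rewrite ?index_mem ?key_sort_mem //.
by rewrite !nth_index ?key_sort_mem.
Qed.

Lemma colourwise_order_embedding (C T U : finType) (pT : T -> C) (pU : U -> C)
    (kT : T -> D) (kU : U -> D) (u0 : U) :
  (forall c, {in [pred x | pT x == c] &, injective kT}) ->
  (forall c, {in [pred y | pU y == c] &, injective kU}) ->
  (forall c, #|[pred x | pT x == c]| <= #|[pred y | pU y == c]|) ->
  exists g : T -> U, (forall x, pU (g x) = pT x) /\
    (forall x y, pT x = pT y -> (kU (g x) < kU (g y))%O = (kT x < kT y)%O).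
Proof.
move=> kTinj kUinj card_le.
have [h hP] := fin_all_exists
  (fun c => keyed_order_embedding u0 (kTinj c) (kUinj c) (card_le c)).
exists (fun x => h (pT x) x); split=> [x | x y same_colour].
  by apply/eqP; apply: (hP (pT x)).1; rewrite inE.
by rewrite /= same_colour; apply: (hP (pT y)).2; rewrite inE ?same_colour.
Qed.

End KeyedChains.

Lemma C3E_next (x y : 'I_3 * nat) : C3E x y = (y.1 == x.1 + 1)%R.
Proof. by rewrite /C3E -val_eqE /= [1 %% 3]modn_small // addn1. Qed.

Definition blowup (n : nat) : Lstr :=
  {| Lcar := ('I_3 * 'I_n)%type;
     LE := fun b b' : 'I_3 * 'I_n => (b'.1 == b.1 + 1)%R |}.

Lemma blowup_in_AgeL (n : nat) : in_AgeL (blowup n).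
Proof.
exists (fun b : 'I_3 * 'I_n => (b.1, val b.2)); split=> [[k i] [k' i'] [-> /val_inj ->] //|b b'].
by rewrite C3E_next.
Qed.

Lemma blowup_colours (n : nat) (f : 'I_3 * 'I_n.+1 -> 'I_3 * nat) :
  L_emb (@LE (blowup n.+1)) C3E f ->
  forall k i, (f (k, i)).1 = (k + (f (0%R, ord0)).1)%R.
Proof.
move=> [_ fE].
have step (k : 'I_3) (i : 'I_n.+1) : (f ((k + 1)%R, ord0)).1 = ((f (k, i)).1 + 1)%R.
  by apply/eqP; rewrite -C3E_next fE /= eqxx.
have col (k : 'I_3) (i : 'I_n.+1) : (f (k, i)).1 = (f (k, ord0)).1.
  by apply: (addIr 1%R); rewrite -!step.
suff col_nat m : (f (m%:R%R, ord0)).1 = (m%:R + (f (0%R, ord0)).1)%R.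
  by move=> k i; rewrite col -{1 2}(natr_Zp k) col_nat.
elim: m => [|m IHm]; first by rewrite add0r.
by rewrite -natr1 (step _ ord0) IHm addrAC.
Qed.

(* Hence every part receives a whole column, of n.+1 points. *)
Lemma blowup_colour_class (n : nat) (f : 'I_3 * 'I_n.+1 -> 'I_3 * nat) :
  L_emb (@LE (blowup n.+1)) C3E f ->
  forall j : 'I_3, n.+1 <= #|[pred b | (f b).1 == j]|.
Proof.
move=> femb j; pose k := (j - (f (0%R, ord0)).1)%R.
have column_card : #|[set (k, i) | i : 'I_n.+1]| = n.+1.
  by rewrite card_imset ?card_ord // => i i' [].
rewrite -[X in X <= _]column_card; apply/subset_leq_card/subsetP => _ /imsetP [i _ ->].
by rewrite inE (blowup_colours femb) subrK.
Qed.

Lemma height_inj_on_colour (disp : Order.disp_t) (D : orderType disp) (T : finType)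
    (rk : nat -> D) (f : T -> 'I_3 * nat) :
  injective rk -> injective f ->
  forall c, {in [pred x | (f x).1 == c] &, injective (fun x => rk (f x).2)}.
Proof.
move=> rkinj finj c x y /eqP cx /eqP cy /rkinj hxy; apply: finj.
by rewrite [f x]surjective_pairing [f y]surjective_pairing cx cy hxy.
Qed.

Lemma colour_order_S_emb (prec : rel nat) (A B : Lstr)
    (PA : 'I_3 -> pred (Lcar A)) (ltA : rel (Lcar A))
    (PB : 'I_3 -> pred (Lcar B)) (ltB : rel (Lcar B))
    (fA : Lcar A -> 'I_3 * nat) (fB : Lcar B -> 'I_3 * nat) (g : Lcar A -> Lcar B) :
  irreflexive prec -> (forall a b, a != b -> prec a b || prec b a) ->
  S_emb (@LE A) PA ltA C3E C3P (C3lt prec) fA ->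
  S_emb (@LE B) PB ltB C3E C3P (C3lt prec) fB ->
  (forall x, (fB (g x)).1 = (fA x).1) ->
  (forall x y, (fA x).1 = (fA y).1 ->
     prec (fB (g x)).2 (fB (g y)).2 = prec (fA x).2 (fA y).2) ->
  S_emb (@LE A) PA ltA (@LE B) PB ltB g.
Proof.
move=> pirr ptot [iA eA pA lA] [_ eB pB lB] gcol gord; split.
- move=> x y gxy; have col : (fA x).1 = (fA y).1 by rewrite -!gcol gxy.
  have [hgt | hgt] := eqVneq (fA x).2 (fA y).2.
    by apply: iA; rewrite [fA x]surjective_pairing [fA y]surjective_pairing col hgt.
  have := ptot _ _ hgt.
  by rewrite -(gord x y col) -(gord y x (esym col)) gxy orbb pirr.
- by move=> x y; rewrite -eB -eA !C3E_next !gcol.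
- by move=> i x; rewrite -pB -pA /C3P gcol.
- move=> x y; rewrite -lB -lA /C3lt !gcol.
  by have [col | _] := eqVneq (fA x).1 (fA y).1; rewrite ?andbF // gord.
Qed.

Theorem theorem5p6 (prec : rel nat) (hprec : iso_to_Q prec) :
  expansion_property prec.
Proof.
have [rk [/bij_inj rkinj prec_rk]] := hprec.
have prec_irr : irreflexive prec by move=> a; rewrite prec_rk ltxx.
have prec_total a b : a != b -> prec a b || prec b a.
  by move=> neq_ab; rewrite !prec_rk lt_total // (inj_eq rkinj).
move=> A _; exists (blowup #|Lcar A|.+1); first exact: blowup_in_AgeL.
move=> PA ltA PB ltB [fA embA] [fB embB].
have [iA _ _ _] := embA; have [iB eB _ _] := embB.
have fB_colours := blowup_colour_class (conj iB eB).
have classes_le c : #|[pred x | (fA x).1 == c]| <= #|[pred y | (fB y).1 == c]|.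
  by rewrite (leq_trans (max_card _)) // ltnW // fB_colours.
have [g [gcol gord]] := colourwise_order_embedding (0%R, ord0)
  (height_inj_on_colour rkinj iA) (height_inj_on_colour rkinj iB) classes_le.
exists g; apply: (colour_order_S_emb prec_irr prec_total embA embB gcol).
by move=> x y col; rewrite !prec_rk gord.
Qed.
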